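(* (1) For disjoint finite $X,Y$, $f\in\mathrm{Bool}(X)$, $g\in\mathrm{Bool}(Y)$: $\mathcal{E}^S(f\star_1g)=\{\sim_X\sqcup\sim_Y\mid\sim_X\in\mathcal{E}^S(f),\ \sim_Y\in\mathcal{E}^S(g)\}$. (2) For $f\in\mathrm{Bool}(X)$ and equivalences $\sim\subseteq\sim'$ on $X$, the following are equivalent: (a) $\sim\in\mathcal{E}^S(f)$ and $\overline{\sim'}\in\mathcal{E}^S(f/{\sim})$; (b) $\sim'\in\mathcal{E}^S(f)$ and $\sim\in\mathcal{E}^S(f\mid\sim')$. (3) For $f\in\mathrm{Bool}(X)$: $=_X$ and $\sim_f^i$ belong to $\mathcal{E}^S(f)$; for $\sim\in\mathcal{E}^S(f)$, $f\mid\sim$ is modular iff $\sim$ is $=_X$, and $f/{\sim}$ is modular iff $\sim=\sim_f^i$. (4) The analogue of the restriction property fails: there exist finite disjoint $X,Y$, $f\in\mathrm{Bool}(X\sqcup Y)$ and equivalences $\sim_X,\sim_Y$ such that $\sim_X\in\mathcal{E}^S(f_{\mid X})$, $\sim_Y\in\mathcal{E}^S(f_{\mid Y})$ but $\sim_X\sqcup\sim_Y\notin\mathcal{E}^S(f)$, and also examples where $\sim_X\sqcup\sim_Y\in\mathcal{E}^S(f)$ but $\sim_X\notin\mathcal{E}^S(f_{\mid X})$.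
   Context: A boolean function on a finite set $X$ is a map $f:\mathcal{P}(X)\to\mathbb{Z}$ with $f(\emptyset)=0$; $\mathrm{Bool}(X)$ is their set; $f_{\mid Y}$ is the restriction to $\mathcal{P}(Y)$. For disjoint $X,Y$, $(f\star_1g)(A)=f(A\cap X)+g(A\cap Y)$ (associative, commutative, unit $1\in\mathrm{Bool}(\emptyset)$). For nonempty $X$, $f$ is indecomposable if $f=f'\star_1f''$ with $f'\in\mathrm{Bool}(X\setminus Y)$, $f''\in\mathrm{Bool}(Y)$ forces $Y\in\{\emptyset,X\}$. Each $f$ determines a unique equivalence $\sim_f^i$ with $f=\prod^{\star_1}_{Y\in X/\sim_f^i}f_{\mid Y}$ and each $f_{\mid Y}$ indecomposable; $\mathrm{ic}(f)=|X/\sim_f^i|$. $f$ is modular if $f(A)=\sum_{x\in A}f(\{x\})$ for all $A$. For an equivalence $\sim$ on $X$: $\mathrm{cl}(\sim)=|X/{\sim}|$, $\varpi_\sim$ the canonical surjection, $f/{\sim}(A)=f(\varpi_\sim^{-1}(A))$, $(f\mid\sim)(A)=\sum_{Y\in X/\sim}f(A\cap Y)$. If $\sim\subseteq\sim'$, $\overline{\sim'}$ is the equivalence on $X/{\sim}$ with $\varpi_\sim(x)\,\overline{\sim'}\,\varpi_\sim(y)\iff x\sim'y$. $=_X$ is the equality relation. $\mathcal{E}^W(f)=\{\sim:\mathrm{ic}(f\mid\sim)=\mathrm{cl}(\sim)\}$ and $\mathcal{E}^S(f)=\{\sim\in\mathcal{E}^W(f):\mathrm{ic}(f/{\sim})=\mathrm{ic}(f)\}$.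 *)

From HB Require Import structures.
From mathcomp Require Import all_boot all_order all_algebra.
From Stdlib Require Import ClassicalEpsilon.
Set Implicit Arguments.
Unset Strict Implicit.
Unset Printing Implicit Defensive.
Import GRing.Theory Num.Theory.
Local Open Scope ring_scope.

(* A finite set X is a finType; a boolean function on X is a map
   f : {set X} -> int with f set0 = 0.  Equivalence relations on X are
   represented by the corresponding partitions P of [set: X]. *)

Definition boolf (X : finType) (f : {set X} -> int) : Prop := f set0 = 0.

Definition star1 (X Y : finType) (f : {set X} -> int) (g : {set Y} -> int)
  : {set (X + Y)%type} -> int :=
  fun A => f (inl @^-1: A) + g (inr @^-1: A).

Definition restrL (X Y : finType) (f : {set (X + Y)%type} -> int) : {set X} -> int :=
  fun B => f (inl @: B).
Definition restrR (X Y : finType) (f : {set (X + Y)%type} -> int) : {set Y} -> int :=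
  fun B => f (inr @: B).

Section Defs.
Variable X : finType.
Implicit Types (f : {set X} -> int) (S Y : {set X}) (P : {set {set X}}).

(* f_{|S} = f' *_1 f'' with f' in Bool(S \ Y), f'' in Bool(Y)
   (functions on subsets of S\Y, resp. Y, represented by functions on {set X}) *)
Definition decomp_on S Y f : Prop :=
  exists f' f'' : {set X} -> int, f' set0 = 0 /\ f'' set0 = 0 /\
    forall A : {set X}, A \subset S -> f A = f' (A :\: Y) + f'' (A :&: Y).

Definition indec_on S f : Prop :=
  S != set0 /\ forall Y, Y \subset S -> decomp_on S Y f -> Y = set0 \/ Y = S.

Definition is_icpart f P : Prop :=
  [/\ partition P [set: X],
      (forall A : {set X}, f A = \sum_(Y in P) f (A :&: Y)) &
      (forall Y, Y \in P -> indec_on Y f)].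

(* ~_f^i (unique by the paper; chosen by Hilbert's epsilon) *)
Definition icpart f : {set {set X}} := epsilon (inhabits set0) (is_icpart f).
Definition ic f : nat := #|icpart f|.

Definition modular f : Prop := forall A : {set X}, f A = \sum_(x in A) f [set x].

Definition eqpart : {set {set X}} := [set [set x] | x : X].

Definition restr_part f P : {set X} -> int := fun A => \sum_(Y in P) f (A :&: Y).

Definition qT P := {C : {set X} | C \in P}.

Definition fquot P f : {set qT P} -> int := fun A => f (\bigcup_(c in A) val c).


Definition refines P P' : Prop := forall C, C \in P -> exists D, D \in P' /\ C \subset D.

Definition qpart P P' : {set {set qT P}} :=
  [set [set c : qT P | val c \subset D] | D : {set X} in P'].

End Defs.
Arguments fquot {X} P f.
Arguments qpart {X} P P'.
Arguments eqpart X.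

Definition EW (X : finType) (f : {set X} -> int) (P : {set {set X}}) : Prop :=
  partition P [set: X] /\ ic (restr_part f P) = #|P|.
Definition ES (X : finType) (f : {set X} -> int) (P : {set {set X}}) : Prop :=
  EW f P /\ ic (fquot P f) = ic f.

Definition dunion (X Y : finType) (PX : {set {set X}}) (PY : {set {set Y}})
  : {set {set (X + Y)%type}} :=
  [set inl @: C | C : {set X} in PX] :|: [set inr @: C | C : {set Y} in PY].

From HB Require Import structures.
From mathcomp Require Import all_boot all_order all_algebra.
From mathcomp Require Import zify.
From Stdlib Require Import ClassicalEpsilon.
Set Implicit Arguments.
Unset Strict Implicit.
Unset Printing Implicit Defensive.
Import GRing.Theory Num.Theory.
Local Open Scope ring_scope.

(* Call Z a splitting set of f when f A = f (A :\: Z) + f (A :&: Z) for all A.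
   Splitting sets form a Boolean algebra whose atoms are the indecomposable
   components of f, so ic f counts these atoms.  Consequently a partition P is
   in E^W(f) iff its blocks are indecomposable for f, and in E^S(f) iff in
   addition every P-saturated set that splits f / P already splits f.  With
   this description, (1) follows because the image of X splits f *_1 g, (2) by
   comparing both sides block by block, and (3) by looking at singletons and at
   components; the counterexamples of (4) are built from the indicator of
   "at least two points". *)

Ltac case_mem :=
  repeat match goal with |- context [?x \in ?A] => case: (x \in A) end;
  first [by [] | by move=> /(_ isT) | by move=> _ /(_ isT)].

Ltac set_cases := apply/setP => ?; rewrite !inE; case_mem.

Section Partitions.
Variable T : finType.
Implicit Types (P Q R : {set {set T}}) (A B C D : {set T}).

Lemma partitionP P : partition P [set: T] <->
  [/\ forall x, exists2 C, C \in P & x \in C,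
      forall C D x, C \in P -> D \in P -> x \in C -> x \in D -> C = D &
      set0 \notin P].
Proof.
split=> [pP|[cov dis n0]].
  split; last by rewrite (partition0 pP).
    move=> x; have : x \in cover P by rewrite (cover_partition pP).
    by case/bigcupP=> C CP xC; exists C.
  move=> C D x CP DP xC xD; apply/eqP; apply: contraT => neCD.
  have /disjointFr/(_ xC) := trivIsetP (partition_trivIset pP) C D CP DP neCD.
  by rewrite xD.
apply/and3P; split => //.
  apply/eqP/setP=> x; rewrite inE; apply/bigcupP.
  by case: (cov x) => C CP xC; exists C.
apply/trivIsetP=> C D CP DP neCD; rewrite -setI_eq0; apply/eqP/setP=> x.
rewrite !inE; apply/negbTE/andP=> -[xC xD].
by move/eqP: neCD; apply; apply: (dis C D x).
Qed.

Lemma partition_sub_eq Q R : partition Q [set: T] -> partition R [set: T] ->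
  Q \subset R -> Q = R.
Proof.
move=> /partitionP[cQ _ _] /partitionP[_ dR nR] sQR.
apply/eqP; rewrite eqEsubset sQR; apply/subsetP=> r rR.
have /set0Pn[x xr] : r != set0 by apply: contraNneq nR => <-.
have [q qQ xq] := cQ x; have qR := subsetP sQR _ qQ.
by rewrite (dR r q x rR qR xr xq).
Qed.

(* A partition Q refining R has at least as many blocks, with equality only
   when Q = R: mapping each block of Q to the block of R containing it is onto,
   and it is injective exactly when it is the identity. *)
Lemma refining_partition_card Q R :
  partition Q [set: T] -> partition R [set: T] ->
  (forall q, q \in Q -> exists2 r, r \in R & q \subset r) ->
  (#|R| <= #|Q|)%N /\ ((#|Q| <= #|R|)%N -> Q = R).
Proof.
move=> pQ pR ref; have [cQ _ nQ] := (partitionP Q).1 pQ.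
have [_ dR nR] := (partitionP R).1 pR.
pose up (q : {set T}) := oapp (pblock R) set0 [pick x in q].
have upP q : q \in Q -> up q \in R /\ q \subset up q.
  move=> qQ; have [r rR sqr] := ref q qQ.
  have /set0Pn[y yq] : q != set0 by apply: contraNneq nQ => <-.
  rewrite /up; case: pickP => [z zq|/(_ y)]; last by rewrite yq.
  by rewrite /= (def_pblock (partition_trivIset pR) rR (subsetP sqr _ zq)).
have eR : R = up @: Q.
  apply/eqP; rewrite eqEsubset; apply/andP; split; last first.
    by apply/subsetP=> _ /imsetP[q qQ ->]; case: (upP q qQ).
  apply/subsetP=> r rR.
  have /set0Pn[x xr] : r != set0 by apply: contraNneq nR => <-.
  have [q qQ xq] := cQ x; have [upR sq] := upP q qQ.
  by apply/imsetP; exists q => //; apply: (dR r (up q) x) => //; apply: (subsetP sq).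
split=> [|le]; first by rewrite eR leq_imset_card.
have inj : {in Q &, injective up}.
  by apply/imset_injP; rewrite eqn_leq leq_imset_card -eR.
apply: partition_sub_eq => //; apply/subsetP=> q qQ.
have [upR sq] := upP q qQ; suff -> : q = up q by [].
apply/eqP; rewrite eqEsubset sq; apply/subsetP=> y yup.
have [q' q'Q yq'] := cQ y; have [up'R sq'] := upP q' q'Q.
by rewrite (inj _ _ qQ q'Q (dR _ _ y upR up'R yup (subsetP sq' _ yq'))).
Qed.

End Partitions.

Section Splits.
Variable T : finType.
Implicit Types (f : {set T} -> int) (A B S Y Z U : {set T}).

Definition splits f Z := forall A, f A = f (A :\: Z) + f (A :&: Z).
Definition splits_in f S Z :=
  forall A, A \subset S -> f A = f (A :\: Z) + f (A :&: Z).
Definition indec_in f S := S != set0 /\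
  forall Z, Z \subset S -> splits_in f S Z -> Z = set0 \/ Z = S.

Definition splitsb f Z := [forall A, f A == f (A :\: Z) + f (A :&: Z)].
Lemma splitsP f Z : reflect (splits f Z) (splitsb f Z).
Proof. by apply: (iffP forallP) => h A; apply/eqP. Qed.

Lemma splits_in_sub f S Z : splits f Z -> splits_in f S Z.
Proof. by move=> s A _; apply: s. Qed.

Lemma splits_inS f S S' Z : S' \subset S -> splits_in f S Z -> splits_in f S' Z.
Proof. by move=> sS l A sA; apply: l; apply: subset_trans sS. Qed.

Lemma eq_splits_in f g S Z : (forall A, A \subset S -> g A = f A) ->
  splits_in g S Z <-> splits_in f S Z.
Proof.
move=> e; have sD A : A \subset S -> A :\: Z \subset S.
  by move=> sA; apply: subset_trans sA; apply: subsetDl.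
have sI A : A \subset S -> A :&: Z \subset S.
  by move=> sA; apply: subset_trans sA; apply: subsetIl.
split=> l A sA.
  by rewrite -(e A sA) -(e _ (sD A sA)) -(e _ (sI A sA)) l.
by rewrite (e A sA) (e _ (sD A sA)) (e _ (sI A sA)) l.
Qed.

Lemma eq_indec_in f g S : (forall A, A \subset S -> g A = f A) ->
  indec_in g S <-> indec_in f S.
Proof.
move=> e; split=> -[n0 h]; split => // Z sZ l; apply: h => //.
  exact/(eq_splits_in Z e).
exact/(eq_splits_in Z e).
Qed.

Lemma indec_in_side f S Z : indec_in f S -> splits_in f S Z ->
  S \subset Z \/ S \subset ~: Z.
Proof.
move=> [_ h] l; case: (h (S :&: Z) (subsetIl _ _)).
- move=> A sA; rewrite (l A sA); congr (f _ + f _);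
    by apply/setP=> x; move: (subsetP sA x); rewrite !inE; case_mem.
- move=> e; right; apply/subsetP=> x xS; rewrite inE; apply/negP=> xZ.
  by have := in_setI x S Z; rewrite e inE xS xZ.
- by move=> e; left; rewrite -e subsetIr.
Qed.

Lemma indec_in1 f x : indec_in f [set x].
Proof.
split; first by apply/set0Pn; exists x; rewrite inE.
by move=> Z; rewrite subset1 => /orP[] /eqP -> _; [right | left].
Qed.

Variable f : {set T} -> int.
Hypothesis f0 : f set0 = 0.

Lemma splits0 : splits f set0.
Proof. by move=> A; rewrite setD0 setI0 f0 addr0. Qed.

Lemma splitsT : splits f setT.
Proof. by move=> A; rewrite setDT setIT f0 add0r. Qed.

Lemma splitsC Z : splits f Z -> splits f (~: Z).
Proof. by move=> s A; rewrite setDE setCK -setDE addrC. Qed.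

Lemma splitsI Y Z : splits f Y -> splits f Z -> splits f (Y :&: Z).
Proof.
move=> sY sZ A; rewrite (sY A) (sZ (A :&: Y)) (sY (A :\: (Y :&: Z))) addrA.
by congr (f _ + f _ + f _); set_cases.
Qed.

Lemma splitsU Y Z : splits f Y -> splits f Z -> splits f (Y :|: Z).
Proof.
move=> sY sZ; rewrite -[Y :|: Z]setCK setCU.
by apply/splitsC/splitsI; apply: splitsC.
Qed.

Lemma splitsD Y Z : splits f Y -> splits f Z -> splits f (Y :\: Z).
Proof. by move=> sY sZ; rewrite setDE; apply/splitsI/splitsC. Qed.

Lemma splits_bigcap (I : finType) (P : pred I) (F : I -> {set T}) :
  (forall i, P i -> splits f (F i)) -> splits f (\bigcap_(i | P i) F i).
Proof.
move=> h; elim/big_rec: _ => [|i X Pi sX]; first exact: splitsT.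
exact: splitsI (h i Pi) sX.
Qed.

Lemma splits_bigcup (I : finType) (P : pred I) (F : I -> {set T}) :
  (forall i, P i -> splits f (F i)) -> splits f (\bigcup_(i | P i) F i).
Proof.
move=> h; elim/big_rec: _ => [|i X Pi sX]; first exact: splits0.
exact: splitsU (h i Pi) sX.
Qed.

Lemma splits_in_trans Y Z : splits f Y -> Z \subset Y -> splits_in f Y Z ->
  splits f Z.
Proof.
move=> sY /subsetP sZY l A.
rewrite (sY A) (l (A :&: Y)) ?subsetIr // (sY (A :\: Z)) addrA.
by congr (f _ + f _ + f _); apply/setP=> x; move: (sZY x); rewrite !inE; case_mem.
Qed.

End Splits.
Arguments splits_in_sub {T f} S {Z}.

Section Components.
Variable T : finType.
Implicit Types (f : {set T} -> int) (A Y Z U : {set T}) (P Q : {set {set T}}).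

Definition component f x := \bigcap_(Z | splitsb f Z && (x \in Z)) Z.
Definition components f := [set component f x | x : T].

Variable f : {set T} -> int.
Hypothesis f0 : f set0 = 0.

Lemma component_id x : x \in component f x.
Proof. by apply/bigcapP => Z /andP[]. Qed.

Lemma component_splits x : splits f (component f x).
Proof. by apply: (splits_bigcap f0) => Z /andP[/splitsP]. Qed.

Lemma component_min x Z : splits f Z -> x \in Z -> component f x \subset Z.
Proof. by move=> sZ xZ; apply: bigcap_inf; rewrite xZ andbT; apply/splitsP. Qed.

Lemma component_minimal x Z : Z \subset component f x -> splits f Z ->
  Z = set0 \/ Z = component f x.
Proof.
move=> sZ sepZ; have [xZ|xZ] := boolP (x \in Z).
  by right; apply/eqP; rewrite eqEsubset sZ component_min.
left; have xZ' : x \in component f x :\: Z by rewrite inE xZ component_id.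
have /subsetP h := component_min (splitsD (component_splits x) sepZ) xZ'.
apply/setP=> y; rewrite inE; apply/negbTE/negP => yZ.
by move: (h y (subsetP sZ y yZ)); rewrite inE yZ.
Qed.

Lemma component_eq x y : x \in component f y -> component f y = component f x.
Proof.
move=> xy; have s := component_min (component_splits y) xy.
have [e|//] := component_minimal s (component_splits x).
by move: (component_id x); rewrite e inE.
Qed.

Lemma componentsP Y : reflect
  [/\ Y != set0, splits f Y & forall Z, Z \subset Y -> splits f Z -> Z = set0 \/ Z = Y]
  (Y \in components f).
Proof.
apply: (iffP imsetP) => [[x _ ->]|[/set0Pn[x xY] sY m]].
  split; [by apply/set0Pn; exists x; apply: component_id
         | exact: component_splits | exact: component_minimal].
exists x => //; have [e|//] := m _ (component_min sY xY) (component_splits x).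
by move: (component_id x); rewrite e inE.
Qed.

Lemma components_nonempty Y : Y \in components f -> Y != set0.
Proof. by case/componentsP. Qed.

Lemma components_splits Y : Y \in components f -> splits f Y.
Proof. by case/componentsP. Qed.

Lemma mem_components x : component f x \in components f.
Proof. exact: imset_f. Qed.

Lemma components_partition : partition (components f) [set: T].
Proof.
apply/partitionP; split.
- by move=> x; exists (component f x); [apply: mem_components | apply: component_id].
- by move=> _ _ x /imsetP[y _ ->] /imsetP[z _ ->] /component_eq-> /component_eq->.
- by apply/negP => /components_nonempty; rewrite eqxx.
Qed.

Lemma component_side Y U : Y \in components f -> splits f U ->
  Y \subset U \/ Y \subset ~: U.
Proof.
move=> /componentsP[_ sY m] sU; case: (m (Y :&: U) (subsetIl _ _) (splitsI sY sU)).
  move=> e; right; apply/subsetP=> x xY; rewrite inE; apply/negP=> xU.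
  by have := in_setI x Y U; rewrite e inE xY xU.
by move=> e; left; rewrite -e subsetIr.
Qed.

Lemma components_refine P : partition P [set: T] ->
  (forall C, C \in P -> splits f C) ->
  forall Y, Y \in components f -> exists2 C, C \in P & Y \subset C.
Proof.
move=> /partitionP[cP _ _] sP Y YA.
have /set0Pn[x xY] := components_nonempty YA; have [C CP xC] := cP x.
exists C => //; case: (component_side YA (sP C CP)) => // s.
by move: (subsetP s x xY); rewrite inE xC.
Qed.

Lemma splits_union_components U :
  (forall x, x \in U -> exists2 Y, Y \in components f & x \in Y /\ Y \subset U) ->
  splits f U.
Proof.
move=> h.
have -> : U = \bigcup_(Y | (Y \in components f) && (Y \subset U)) Y.
  apply/setP=> x; apply/idP/bigcupP => [xU|[Y /andP[_ sY] xY]].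
    by have [Y YA [xY sY]] := h x xU; exists Y; rewrite ?YA.
  exact: (subsetP sY).
by apply: (splits_bigcup f0) => Y /andP[/components_splits].
Qed.

Lemma components_indec_in Y : Y \in components f -> indec_in f Y.
Proof.
move=> /componentsP[n0 sY m]; split => // Z sZ l.
exact: m (splits_in_trans sY sZ l).
Qed.

Lemma splits_indec_in_components Y : splits f Y -> indec_in f Y ->
  Y \in components f.
Proof.
move=> sY [n0 m]; apply/componentsP; split => // Z sZ sZ'.
exact: m sZ (splits_in_sub Y sZ').
Qed.

End Components.

Section IndecomposableComponents.
Variable T : finType.
Implicit Types (f g : {set T} -> int) (A B C D V S Y Z : {set T}) (P Q : {set {set T}}).

Lemma splits_sum_blocks f Q : f set0 = 0 -> partition Q [set: T] ->
  (forall Y, Y \in Q -> splits f Y) -> forall A, f A = \sum_(Y in Q) f (A :&: Y).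
Proof.
move=> f0 pQ sQ A; have [_ dQ _] := (partitionP Q).1 pQ.
suff h s : uniq s -> {subset s <= Q} ->
    f (A :&: \bigcup_(Y <- s) Y) = \sum_(Y <- s) f (A :&: Y).
  rewrite -big_enum -h; [|exact: enum_uniq|by move=> Y; rewrite mem_enum].
  by rewrite big_enum -/(cover Q) (cover_partition pQ) setIT.
elim: s => [|Y s IH] /=; first by rewrite !big_nil setI0 f0.
case/andP=> Ys us ss; rewrite !big_cons -IH => [|//|Y' Y's]; last first.
  by apply: ss; rewrite inE Y's orbT.
have YQ : Y \in Q by apply: ss; rewrite inE eqxx.
have disj x : x \in \bigcup_(Y' <- s) Y' -> x \notin Y.
  rewrite bigcup_seq => /bigcupP[Y' Y's xY']; apply/negP=> xY.
  have Y'Q : Y' \in Q by apply: ss; rewrite inE Y's orbT.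
  by move: Ys; rewrite -(dQ _ _ x Y'Q YQ xY' xY) Y's.
rewrite (sQ Y YQ) addrC; congr (f _ + f _); apply/setP=> x;
  by move: (disj x); rewrite !inE; case_mem.
Qed.

Lemma sum_blocks_splits f Q : f set0 = 0 -> partition Q [set: T] ->
  (forall A, f A = \sum_(Y in Q) f (A :&: Y)) -> forall Y, Y \in Q -> splits f Y.
Proof.
move=> f0 pQ hs Y YQ A; have [_ dQ _] := (partitionP Q).1 pQ.
rewrite (hs A) (hs (A :\: Y)) (hs (A :&: Y)) -big_split /=.
apply: eq_bigr => Y' Y'Q; have [->|ne] := eqVneq Y' Y.
  by rewrite -setIA setIid (_ : (A :\: Y) :&: Y = set0) ?f0 ?add0r //; set_cases.
have disj x : x \in Y' -> x \notin Y.
  by move=> xY'; apply/negP=> xY; move/eqP: ne; apply; apply: (dQ Y' Y x).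
rewrite -[f (A :&: Y')]addr0 -f0; congr (f _ + f _);
  by apply/setP=> x; move: (disj x); rewrite !inE; case_mem.
Qed.

Lemma decomp_onE f S Z : f set0 = 0 -> decomp_on S Z f <-> splits_in f S Z.
Proof.
move=> f0; split=> [[f' [f'' [f'0 [f''0 h]]]] A sA|l]; last first.
  by exists f, f; do !split.
have sub B : B \subset A -> B \subset S by move/subset_trans; apply.
rewrite (h A sA) (h _ (sub _ (subsetDl A Z))) (h _ (sub _ (subsetIl A Z))).
have -> : A :\: Z :\: Z = A :\: Z by set_cases.
have -> : (A :\: Z) :&: Z = set0 by set_cases.
have -> : A :&: Z :\: Z = set0 by set_cases.
by rewrite -setIA setIid f'0 f''0 addr0 add0r.
Qed.

Lemma indec_onE f S : f set0 = 0 -> indec_on S f <-> indec_in f S.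
Proof.
by move=> f0; split=> -[n0 h]; split => // Z sZ /(decomp_onE _ _ f0) l; apply: h.
Qed.

Lemma icpart_components f : f set0 = 0 -> icpart f = components f.
Proof.
move=> f0; have cP := components_partition f0.
have ex : exists Q, is_icpart f Q.
  exists (components f); split => // [|Y YA].
    by apply: splits_sum_blocks => // Y /components_splits; apply.
  exact/(indec_onE _ f0)/components_indec_in.
have [pQ hs hi] := epsilon_spec (inhabits set0) (is_icpart f) ex.
rewrite -/(icpart f) in pQ hs hi.
apply: partition_sub_eq => //; apply/subsetP=> Y YQ.
apply: splits_indec_in_components => //; first exact: (sum_blocks_splits f0 pQ hs).
exact/(indec_onE _ f0)/hi.
Qed.

Lemma icE f : f set0 = 0 -> ic f = #|components f|.
Proof. by move=> f0; rewrite /ic icpart_components. Qed.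

End IndecomposableComponents.

Section RestrictionToPartition.
Variable T : finType.
Variables (f : {set T} -> int) (P : {set {set T}}).
Hypotheses (f0 : f set0 = 0) (pP : partition P [set: T]).
Implicit Types (A C D S V : {set T}).

Lemma restr_part0 : restr_part f P set0 = 0.
Proof. by rewrite /restr_part big1 // => Y _; rewrite set0I. Qed.

Lemma restr_part_block D A : D \in P -> A \subset D -> restr_part f P A = f A.
Proof.
move=> DP sAD; have [_ dP _] := (partitionP P).1 pP.
rewrite /restr_part (big_setD1 _ DP) /= (setIidPl sAD) big1 ?addr0 //.
move=> D' /setD1P[ne D'P]; rewrite -f0; congr f; apply/setP=> x; rewrite !inE.
apply/negbTE/andP=> -[xA xD']; move/eqP: ne; apply; apply: (dP D' D x) => //.
exact: (subsetP sAD).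
Qed.

Lemma restr_part_split D V A : D \in P -> V \subset D ->
  f (A :&: D) = f (A :&: D :\: V) + f (A :&: D :&: V) ->
  restr_part f P A = restr_part f P (A :\: V) + restr_part f P (A :&: V).
Proof.
move=> DP sVD e; have [_ dP _] := (partitionP P).1 pP.
rewrite /restr_part -big_split /=; apply: eq_bigr => D' D'P.
have [->|ne] := eqVneq D' D.
  by rewrite e; congr (f _ + f _); set_cases.
have disj x : x \in V -> x \notin D'.
  move=> xV; apply/negP=> xD'; move/eqP: ne; apply; apply: (dP D' D x) => //.
  exact: (subsetP sVD).
rewrite -[f (A :&: D')]addr0 -f0; congr (f _ + f _);
  by apply/setP=> x; move: (disj x); rewrite !inE; case_mem.
Qed.

Lemma restr_part_splits_block D : D \in P -> splits (restr_part f P) D.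
Proof.
move=> DP A; apply: (restr_part_split DP (subxx D)).
by rewrite setDIl setDv setI0 f0 add0r -setIA setIid.
Qed.

Lemma restr_part_indec_in D S : D \in P -> S \subset D ->
  indec_in (restr_part f P) S <-> indec_in f S.
Proof.
by move=> DP sSD; apply: eq_indec_in => A sA; apply: (restr_part_block DP);
  apply: subset_trans sSD.
Qed.

Lemma restr_part_components : (forall C, C \in P -> indec_in f C) ->
  components (restr_part f P) = P.
Proof.
move=> hi; symmetry; apply: partition_sub_eq => //.
  exact: components_partition restr_part0.
apply/subsetP=> C CP; apply: (splits_indec_in_components restr_part0).
  exact: restr_part_splits_block.
by apply/(restr_part_indec_in CP (subxx C))/hi.
Qed.

End RestrictionToPartition.

Lemma EWP (T : finType) (f : {set T} -> int) P : f set0 = 0 ->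
  EW f P <-> partition P [set: T] /\ (forall C, C \in P -> indec_in f C).
Proof.
move=> f0; split=> [[pP]|[pP hi]]; last first.
  by split; rewrite // (icE (restr_part0 _ f0)) restr_part_components.
have g0 := restr_part0 P f0; rewrite (icE g0) => e; split => // C CP.
have [_ h] := refining_partition_card (components_partition g0) pP
  (components_refine g0 pP (@restr_part_splits_block _ f P f0 pP)).
have eA : components (restr_part f P) = P by apply: h; rewrite e.
apply/(restr_part_indec_in f0 pP CP (subxx C)).
by apply: (components_indec_in g0); rewrite eA.
Qed.

Section Saturation.
Variable T : finType.
Implicit Types (f : {set T} -> int) (A S U V Z : {set T}) (P : {set {set T}}).

Definition saturated P U := forall C, C \in P -> C \subset U \/ C \subset ~: U.
Definition splits_sat f P U :=
  forall A, saturated P A -> f A = f (A :\: U) + f (A :&: U).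
Definition splits_sat_in f P S U := forall A, saturated P A -> A \subset S ->
  f A = f (A :\: U) + f (A :&: U).
Definition indec_sat f P S := S != set0 /\
  forall Z, saturated P Z -> Z \subset S -> splits_sat_in f P S Z -> Z = set0 \/ Z = S.
(* By [splits_fquot], [splits_sat f P U] says that [qpre P U] splits f / P. *)
Definition lifts_splits f P := forall U, saturated P U -> splits_sat f P U -> splits f U.

Lemma saturatedI P U V : saturated P U -> saturated P V -> saturated P (U :&: V).
Proof.
move=> sU sV C CP; rewrite setCI subsetI.
case: (sU C CP) (sV C CP) => hU [] hV; first by left; rewrite hU.
- by right; apply: subset_trans hV (subsetUr _ _).
- by right; apply: subset_trans hU (subsetUl _ _).
- by right; apply: subset_trans hU (subsetUl _ _).
Qed.

Lemma saturated_block P D : partition P [set: T] -> D \in P -> saturated P D.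
Proof.
move=> pP DP C CP; have [->|ne] := eqVneq C D; first by left.
right; apply/subsetP=> x xC; rewrite inE; apply/negP=> xD.
have [_ dP _] := (partitionP P).1 pP.
by move/eqP: ne; apply; apply: (dP C D x).
Qed.

Lemma saturated_refine P (P' : {set {set T}}) U : refines P P' -> saturated P' U -> saturated P U.
Proof.
move=> r sU C CP; have [D [DP' sCD]] := r C CP.
by case: (sU D DP') => h; [left | right]; apply: subset_trans h.
Qed.

Lemma saturated_blockwise P U :
  (forall D, D \in P -> U :&: D = set0 \/ U :&: D = D) -> saturated P U.
Proof.
move=> h D DP; case: (h D DP) => e; [right | left]; last by rewrite -e subsetIl.
apply/subsetP=> x xD; rewrite inE; apply/negP=> xU.
by have := in_setI x U D; rewrite e inE xU xD.
Qed.

Lemma saturated_splits_restr_part f P U : f set0 = 0 -> partition P [set: T] ->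
  saturated P U -> splits (restr_part f P) U.
Proof.
move=> f0 pP sU; have [cP _ _] := (partitionP P).1 pP.
have -> : U = \bigcup_(D | (D \in P) && (D \subset U)) D.
  apply/setP=> x; apply/idP/bigcupP => [xU|[D /andP[_ sD] xD]].
    have [D DP xD] := cP x; exists D => //; rewrite DP /=.
    by case: (sU D DP) => // /subsetP /(_ x xD); rewrite inE xU.
  exact: (subsetP sD).
by apply: (splits_bigcup (restr_part0 P f0)) => D /andP[DP _];
  apply: restr_part_splits_block.
Qed.

End Saturation.

Section Quotient.
Variable T : finType.
Variable P : {set {set T}}.
Hypothesis pP : partition P [set: T].
Implicit Types (f : {set T} -> int) (A U : {set T}) (c d : qT P) (S Z : {set qT P}).

(* [qunion S] is varpi^-1(S), so [fquot P f] is [f \o qunion]; [qpre] inverts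
   [qunion] on saturated sets. *)
Definition qunion S : {set T} := \bigcup_(c in S) val c.
Definition qpre U : {set qT P} := [set c : qT P | val c \subset U].

Lemma qblock_neq0 c : val c != set0.
Proof. exact: partition_neq0 pP (valP c). Qed.

Lemma qblock_cover x : exists c : qT P, x \in val c.
Proof.
have [cP _ _] := (partitionP P).1 pP; have [C CP xC] := cP x.
by exists (exist _ C CP).
Qed.

Lemma mem_qunion x c S : x \in val c -> (x \in qunion S) = (c \in S).
Proof.
move=> xc; apply/bigcupP/idP => [[d dS xd]|cS]; last by exists c.
have [_ dP _] := (partitionP P).1 pP.
by rewrite (val_inj (dP _ _ x (valP c) (valP d) xc xd)).
Qed.

Lemma qunionI S S' : qunion (S :&: S') = qunion S :&: qunion S'.
Proof.
by apply/setP=> x; have [c xc] := qblock_cover x; rewrite inE !(mem_qunion _ xc) inE.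
Qed.

Lemma qunionD S S' : qunion (S :\: S') = qunion S :\: qunion S'.
Proof.
apply/setP=> x; have [c xc] := qblock_cover x.
by rewrite inE !(mem_qunion _ xc) inE andbC.
Qed.

Lemma qunionC S : qunion (~: S) = ~: qunion S.
Proof.
by apply/setP=> x; have [c xc] := qblock_cover x; rewrite inE !(mem_qunion _ xc) inE.
Qed.

Lemma qunion0 : qunion set0 = set0.
Proof. by rewrite /qunion big_set0. Qed.

Lemma qunion1 c : qunion [set c] = val c.
Proof. by rewrite /qunion big_set1. Qed.

Lemma qunionK : cancel qunion qpre.
Proof.
move=> S; apply/setP=> c; rewrite inE; apply/idP/idP => [|cS].
  have /set0Pn[x xc] := qblock_neq0 c.
  by move/subsetP/(_ x xc); rewrite (mem_qunion _ xc).
by apply/subsetP=> x xc; rewrite (mem_qunion _ xc).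
Qed.

Lemma qunion_inj : injective qunion.
Proof. exact: can_inj qunionK. Qed.

Lemma qunion_eq0 S : (qunion S == set0) = (S == set0).
Proof. by rewrite -qunion0 (inj_eq qunion_inj). Qed.

Lemma qunion_saturated S : saturated P (qunion S).
Proof.
move=> C CP; pose c : qT P := exist _ C CP.
have [cS|cS] := boolP (c \in S); [left | right]; apply/subsetP=> x xC.
  by rewrite (mem_qunion (c := c)).
by rewrite inE (mem_qunion (c := c)).
Qed.

Lemma qpreK U : saturated P U -> qunion (qpre U) = U.
Proof.
move=> sU; apply/setP=> x; have [c xc] := qblock_cover x.
rewrite (mem_qunion _ xc) inE; apply/idP/idP => [/subsetP/(_ x xc) //|xU].
by case: (sU _ (valP c)) => // /subsetP/(_ x xc); rewrite inE xU.
Qed.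

Lemma saturated_qunion U : saturated P U -> exists S, U = qunion S.
Proof. by move=> sU; exists (qpre U); rewrite qpreK. Qed.

Lemma qunion_subset S S' : (qunion S \subset qunion S') = (S \subset S').
Proof.
apply/idP/idP => h.
  apply/subsetP=> c cS; have /set0Pn[x xc] := qblock_neq0 c.
  by rewrite -(mem_qunion _ xc); apply: (subsetP h); rewrite (mem_qunion _ xc).
apply/subsetP=> x; have [c xc] := qblock_cover x.
by rewrite !(mem_qunion _ xc); apply: (subsetP h).
Qed.

Lemma fquot0 f : f set0 = 0 -> fquot P f set0 = 0.
Proof. by move=> f0; rewrite /fquot big_set0. Qed.

Lemma fquotE f S : fquot P f S = f (qunion S).
Proof. by []. Qed.

Lemma splits_fquot f S : splits (fquot P f) S <-> splits_sat f P (qunion S).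
Proof.
split=> h A; last by rewrite !fquotE qunionD qunionI; apply/h/qunion_saturated.
by case/saturated_qunion=> A' ->; rewrite -qunionD -qunionI -!fquotE h.
Qed.

Lemma splits_in_fquot f S Z :
  splits_in (fquot P f) S Z <-> splits_sat_in f P (qunion S) (qunion Z).
Proof.
split=> h A.
  case/saturated_qunion=> A' -> sub.
  by rewrite -qunionD -qunionI -!fquotE h // -qunion_subset.
move=> sub; rewrite !fquotE qunionD qunionI.
by apply: h; [apply: qunion_saturated | rewrite qunion_subset].
Qed.

Lemma indec_in_fquot f S : indec_in (fquot P f) S <-> indec_sat f P (qunion S).
Proof.
split=> -[n0 h].
  split=> [|_ /saturated_qunion[Z ->]]; first by rewrite qunion_eq0.
  rewrite qunion_subset => sub /splits_in_fquot l.
  by case: (h Z sub l) => ->; [left; apply: qunion0 | right].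
split=> [|Z sub l]; first by rewrite -qunion_eq0.
have [||/eqP|/qunion_inj] := h (qunion Z) (qunion_saturated Z).
- by rewrite qunion_subset.
- exact/splits_in_fquot.
- by rewrite qunion_eq0 => /eqP; left.
- by right.
Qed.

End Quotient.

Section StrongCondition.
Variable T : finType.
Variables (f : {set T} -> int) (P : {set {set T}}).
Hypotheses (f0 : f set0 = 0) (pP : partition P [set: T])
  (indecP : forall C, C \in P -> indec_in f C).
Implicit Types (U Y : {set T}).

Lemma components_saturated Y : Y \in components f -> saturated P Y.
Proof.
move=> YA C CP; apply: indec_in_side (indecP CP) _.
exact/splits_in_sub/(components_splits f0).
Qed.

Let qcomponents := [set qpre P Y | Y in components f].

Lemma qpre_componentK Y : Y \in components f -> qunion (qpre P Y) = Y.
Proof. by move=> YA; apply/qpreK/components_saturated. Qed.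

Lemma qcomponents_partition : partition qcomponents [set: qT P].
Proof.
have [cA dA nA] := (partitionP _).1 (components_partition f0).
apply/partitionP; split.
- move=> c; have /set0Pn[x xc] := qblock_neq0 pP c; have [Y YA xY] := cA x.
  exists (qpre P Y); first exact: imset_f.
  by rewrite -(mem_qunion pP _ xc) qpre_componentK.
- move=> _ _ c /imsetP[Y YA ->] /imsetP[Y' Y'A ->] cY cY'.
  have /set0Pn[x xc] := qblock_neq0 pP c.
  rewrite -(mem_qunion pP _ xc) qpre_componentK // in cY.
  rewrite -(mem_qunion pP _ xc) qpre_componentK // in cY'.
  by rewrite (dA _ _ x YA Y'A cY cY').
- apply/imsetP=> -[Y YA e]; move: (components_nonempty f0 YA).
  by rewrite -(qpre_componentK YA) -e qunion0 eqxx.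
Qed.

Lemma card_qcomponents : #|qcomponents| = #|components f|.
Proof.
apply: card_in_imset => Y Y' YA Y'A e.
by rewrite -(qpre_componentK YA) e qpre_componentK.
Qed.

Lemma qcomponents_splits S : S \in qcomponents -> splits (fquot P f) S.
Proof.
case/imsetP=> Y YA ->; apply/(splits_fquot pP) => //; rewrite qpre_componentK //.
by move=> A _; apply: (components_splits f0).
Qed.

Lemma ic_fquot_eq : ic (fquot P f) = ic f <-> lifts_splits f P.
Proof.
have g0 := fquot0 P f0; have pG := qcomponents_partition.
have ref := components_refine g0 pG qcomponents_splits.
have [le eqG] := refining_partition_card (components_partition g0) pG ref.
rewrite (icE g0) (icE f0) -card_qcomponents; split=> [e U sU sUs|lift].
  have eA : components (fquot P f) = qcomponents by apply: eqG; rewrite e.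
  have sgU : splits (fquot P f) (qpre P U) by apply/(splits_fquot pP); rewrite (qpreK pP sU).
  apply: (splits_union_components f0) => x xU.
  have [c xc] := qblock_cover pP x.
  have cU : c \in qpre P U by rewrite -(mem_qunion pP _ xc) (qpreK pP sU).
  have /imsetP[Y YA eY] : component (fquot P f) c \in qcomponents.
    by rewrite -eA mem_components.
  exists Y => //; split.
    by rewrite -(qpre_componentK YA) -eY (mem_qunion pP _ xc) component_id.
  rewrite -(qpre_componentK YA) -eY -(qpreK pP sU) (qunion_subset pP).
  case: (component_side g0 (mem_components _ c) sgU) => // /subsetP/(_ c).
  by rewrite component_id inE cU => /(_ isT).
apply/eqP; rewrite eqn_leq le andbT; apply/subset_leq_card/subsetP=> a aA.
have sa : splits f (qunion a).
  by apply: lift; [exact: (qunion_saturated pP) | apply/(splits_fquot pP)/(components_splits g0)].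
have [_ /imsetP[Y YA ->] saY] := ref a aA.
have /(componentsP f0)[_ _ minY] := YA.
have sub : qunion a \subset Y by rewrite -(qpre_componentK YA) (qunion_subset pP).
have [/eqP|e] := minY (qunion a) sub sa.
- by rewrite (qunion_eq0 pP) (negbTE (components_nonempty g0 aA)).
- by rewrite -(qunionK pP a) e imset_f.
Qed.

End StrongCondition.

Lemma ESP (T : finType) (f : {set T} -> int) P : f set0 = 0 -> ES f P <->
  [/\ partition P [set: T], (forall C, C \in P -> indec_in f C) & lifts_splits f P].
Proof.
move=> f0; split=> [[/(EWP _ f0)[pP hi] e]|[pP hi lift]].
  by split=> //; apply/(ic_fquot_eq f0 pP hi).
by split; [apply/EWP | apply/(ic_fquot_eq f0 pP hi)].
Qed.

Lemma modular_splits1 (T : finType) (g : {set T} -> int) : g set0 = 0 ->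
  modular g <-> forall x, splits g [set x].
Proof.
move=> g0; split=> [m x A|h A].
  by rewrite !m (big_setID [set x]) addrC.
elim: {A}_.+1 {-2}A (ltnSn #|A|) => // n IH A; rewrite ltnS => cA.
have [->|/set0Pn[x xA]] := eqVneq A set0; first by rewrite big_set0.
rewrite (big_setD1 _ xA) (h x A) -(IH (A :\ x)); last by rewrite (cardsD1 x) xA in cA.
by rewrite (setIidPr _) ?sub1set // addrC.
Qed.

Section ExtremePartitions.
Variable T : finType.
Variable f : {set T} -> int.
Hypothesis f0 : f set0 = 0.
Implicit Types (P : {set {set T}}) (U : {set T}).

Lemma eqpart_partition : partition (eqpart T) [set: T].
Proof.
apply/partitionP; split.
- by move=> x; exists [set x]; [apply: imset_f | rewrite inE].
- by move=> _ _ x /imsetP[y _ ->] /imsetP[z _ ->]; rewrite !inE => /eqP<- /eqP<-.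
- by apply/imsetP=> -[x _ /setP/(_ x)]; rewrite !inE eqxx.
Qed.

Lemma saturated_eqpart U : saturated (eqpart T) U.
Proof.
move=> _ /imsetP[x _ ->]; have [xU|xU] := boolP (x \in U); [left | right];
  by rewrite sub1set ?inE xU.
Qed.

Lemma ES_eqpart : ES f (eqpart T).
Proof.
apply/(ESP _ f0); split.
- exact: eqpart_partition.
- by move=> _ /imsetP[x _ ->]; apply: indec_in1.
- by move=> U _ ps A; apply/ps/saturated_eqpart.
Qed.

Lemma ES_components : ES f (components f).
Proof.
apply/(ESP _ f0); split.
- exact: components_partition.
- exact: components_indec_in.
move=> U sU _; apply: (splits_union_components f0) => x xU.
exists (component f x); rewrite ?mem_components ?component_id //; split=> //.
case: (sU _ (mem_components f x)) => // /subsetP /(_ x (component_id f x)).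
by rewrite inE xU.
Qed.

Lemma ES_modular_restr_part P : ES f P ->
  modular (restr_part f P) <-> P = eqpart T.
Proof.
case/(ESP _ f0) => pP hi _; have g0 := restr_part0 P f0.
rewrite (modular_splits1 g0); split=> [h|-> x]; last first.
  by apply: (restr_part_splits_block f0 eqpart_partition); apply: imset_f.
rewrite -(restr_part_components f0 pP hi); apply: partition_sub_eq.
- exact: components_partition.
- exact: eqpart_partition.
apply/subsetP=> Y YA; have /(componentsP g0)[/set0Pn[x xY] _ m] := YA.
case: (m [set x]); rewrite ?sub1set // => e.
  by move: (set11 x); rewrite e inE.
by rewrite -e imset_f.
Qed.

Lemma ES_modular_fquot P : ES f P -> modular (fquot P f) <-> P = icpart f.
Proof.
case/(ESP _ f0) => pP hi lift; have h0 := fquot0 P f0.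
rewrite (modular_splits1 h0) icpart_components //; split=> [hs|eP c].
  apply: partition_sub_eq => //; first exact: components_partition.
  apply/subsetP=> C CP; pose c : qT P := exist _ C CP.
  have sC : splits f C.
    apply: lift; rewrite -[C]/(val c) -(qunion1 c).
      exact: qunion_saturated.
    exact/(splits_fquot pP).
  exact: (splits_indec_in_components f0 sC (hi C CP)).
apply/(splits_fquot pP); rewrite qunion1 => A _.
by apply: (components_splits f0); rewrite -eP (valP c).
Qed.

End ExtremePartitions.

Section Refinement.
Variable T : finType.
Variables (P P' : {set {set T}}).
Hypotheses (pP : partition P [set: T]) (pP' : partition P' [set: T])
  (refPP' : refines P P').
Implicit Types (f : {set T} -> int) (A C D U V Z : {set T}) (S : {set qT P}).

Lemma saturated_coarse_block D : D \in P' -> saturated P D.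
Proof. by move=> DP; apply: (saturated_refine refPP'); apply: saturated_block. Qed.

Lemma qpart_partition : partition (qpart P P') [set: qT P].
Proof.
apply/partitionP; split.
- move=> c; have [D [DP sD]] := refPP' (valP c).
  by exists (qpre P D); [apply: imset_f | rewrite inE].
- move=> _ _ c /imsetP[D DP ->] /imsetP[D' DP' ->]; rewrite !inE => s s'.
  have /set0Pn[x xc] := qblock_neq0 pP c.
  have [_ dP _] := (partitionP _).1 pP'.
  by rewrite (dP D D' x DP DP' (subsetP s x xc) (subsetP s' x xc)).
- apply/imsetP=> -[D DP e]; have := partition_neq0 pP' DP.
  by have := qpreK pP (saturated_coarse_block DP); rewrite /qpre -e qunion0 => <-; rewrite eqxx.
Qed.

Lemma saturated_qpart S : saturated (qpart P P') S <-> saturated P' (qunion S).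
Proof.
split=> h.
  move=> D DP; have qDK := qpreK pP (saturated_coarse_block DP).
  case: (h (qpre P D)); first exact: imset_f.
    by left; rewrite -qDK (qunion_subset pP).
  by right; rewrite -qDK -(qunionC pP) (qunion_subset pP).
move=> _ /imsetP[D DP ->]; have qDK := qpreK pP (saturated_coarse_block DP).
by case: (h D DP) => s; [left | right];
  rewrite -(qunion_subset pP) ?(qunionC pP) qDK.
Qed.

Lemma splits_sat_qpart f S :
  splits_sat (fquot P f) (qpart P P') S <-> splits_sat f P' (qunion S).
Proof.
split=> h A sA.
  have [A' eA] := saturated_qunion pP (saturated_refine refPP' sA); subst A.
  by rewrite -(qunionD pP) -(qunionI pP) -!fquotE; apply/h/saturated_qpart.
by rewrite !fquotE (qunionD pP) (qunionI pP); apply/h/saturated_qpart.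
Qed.

Lemma ES_fquot_qpart f : f set0 = 0 ->
  ES (fquot P f) (qpart P P') <->
  (forall D, D \in P' -> indec_sat f P D) /\
  (forall U, saturated P' U -> splits_sat f P' U -> splits_sat f P U).
Proof.
move=> f0; rewrite (ESP _ (fquot0 P f0)); split=> [[_ hi lift]|[hi lift]].
  split=> [D DP|U sU ps].
    rewrite -(qpreK pP (saturated_coarse_block DP)); apply/(indec_in_fquot pP).
    exact/hi/imset_f.
  have [S eS] := saturated_qunion pP (saturated_refine refPP' sU); subst U.
  apply/(splits_fquot pP)/lift; first exact/saturated_qpart.
  exact/splits_sat_qpart.
split=> [|_ /imsetP[D DP ->]|S sS ps]; first exact: qpart_partition.
  apply/(indec_in_fquot pP).
  by rewrite -/(qpre P D) (qpreK pP (saturated_coarse_block DP)); apply: hi.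
by apply/(splits_fquot pP)/lift; [exact/saturated_qpart | exact/splits_sat_qpart].
Qed.

Lemma ES_restr_part f : f set0 = 0 ->
  ES (restr_part f P') P <->
  (forall C, C \in P -> indec_in f C) /\ lifts_splits (restr_part f P') P.
Proof.
move=> f0; have indecE C : C \in P -> indec_in (restr_part f P') C <-> indec_in f C.
  by move=> CP; have [D [DP sCD]] := refPP' CP; exact: (restr_part_indec_in f0 pP' DP sCD).
rewrite (ESP _ (restr_part0 P' f0)); split=> [[_ hi lift]|[hi lift]].
  by split=> // C CP; apply/indecE/hi.
by split=> // C CP; apply/indecE/hi.
Qed.

Lemma splits_sat_in_block f D U : splits_sat f P U -> splits_sat_in f P D (U :&: D).
Proof.
move=> ps A sA /subsetP sAD; rewrite (ps A sA); congr (f _ + f _);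
  by apply/setP=> x; move: (sAD x); rewrite !inE; case_mem.
Qed.

Lemma saturated_of_indec_sat f U : (forall D, D \in P' -> indec_sat f P D) ->
  saturated P U -> (forall D, D \in P' -> splits_sat_in f P D (U :&: D)) ->
  saturated P' U.
Proof.
move=> hi sU ps; apply: saturated_blockwise => D DP; have [_ m] := hi D DP.
apply: m (subsetIr _ _) (ps D DP).
exact: saturatedI sU (saturated_coarse_block DP).
Qed.

Section Blocks.
Variable f : {set T} -> int.
Hypothesis f0 : f set0 = 0.
Variable D : {set T}.
Hypothesis DP : D \in P'.

Lemma saturated_split_block Z : (forall C, C \in P -> indec_in f C) ->
  Z \subset D -> splits_in f D Z -> saturated P Z.
Proof.
move=> hi sZD l C CP; have [sCD|sCD] := saturated_coarse_block DP CP.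
  exact: indec_in_side (hi C CP) (splits_inS sCD l).
by right; apply: subset_trans sCD _; rewrite setCS.
Qed.

Lemma splits_sat_restr_part_block U : splits_sat (restr_part f P') P U ->
  splits_sat_in f P D (U :&: D).
Proof.
move=> ps; have e := restr_part_block f0 pP' DP.
move=> A sA sAD; have sub (B : {set T}) : B \subset A -> B \subset D by move/subset_trans; apply.
rewrite -!e ?sub ?subsetDl ?subsetIl //.
exact: (splits_sat_in_block (D := D) ps).
Qed.

Lemma splits_sat_restr_part V : V \subset D -> splits_sat_in f P D V ->
  splits_sat (restr_part f P') P V.
Proof.
move=> sVD ps A sA; apply: (restr_part_split f0 pP' DP sVD).
by apply: ps (subsetIr _ _); apply: saturatedI sA (saturated_coarse_block DP).
Qed.

Lemma splits_restr_part_in V : splits (restr_part f P') V -> splits_in f D V.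
Proof.
move=> s; apply/(eq_splits_in (g := restr_part f P')) => [A sA|A _].
  exact: (restr_part_block f0 pP' DP sA).
exact: s.
Qed.

End Blocks.

Lemma ES_refine f : f set0 = 0 ->
  (ES f P /\ ES (fquot P f) (qpart P P')) <-> (ES f P' /\ ES (restr_part f P') P).
Proof.
move=> f0; rewrite !(ESP _ f0) (ES_fquot_qpart f0) (ES_restr_part f0).
split=> [[[_ hiP liftP] [hiq liftq]]|[[_ hiP' liftP'] [hiP liftr]]].
  have indecP' D : D \in P' -> indec_in f D.
    move=> DP; have [n0 m] := hiq D DP; split=> // Z sZ l.
    by apply: m => // [|A _ sA]; [exact: saturated_split_block hiP sZ l | exact: l].
  split; split=> // U sU ps.
    by apply: liftP (saturated_refine refPP' sU) (liftq U sU ps).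
  apply: (saturated_splits_restr_part f0 pP').
  apply: saturated_of_indec_sat hiq sU _ => D DP.
  exact: splits_sat_restr_part_block.
have hiq D : D \in P' -> indec_sat f P D.
  move=> DP; split=> [|V sV sVD ps]; first exact: partition_neq0 pP' DP.
  have [_ m] := hiP' D DP; apply: (m V sVD).
  exact/(splits_restr_part_in f0 DP)/liftr/(splits_sat_restr_part f0 DP sVD).
split; split=> // U sU ps; last by move=> A sA; rewrite (liftP' U sU ps).
apply: liftP' => [|A sA]; last exact: ps (saturated_refine refPP' sA).
apply: saturated_of_indec_sat hiq sU _ => D DP; exact: splits_sat_in_block.
Qed.

End Refinement.

Section Embedding.
Variables (W X : finType) (e : X -> W).
Hypothesis e_inj : injective e.
Variables (f : {set X} -> int) (k h : {set W} -> int).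
Let im := e @: [set: X].
Hypotheses (f0 : f set0 = 0) (k0 : k set0 = 0)
  (k_out : forall A, k A = k (A :\: im))
  (hE : forall A, h A = f (e @^-1: A) + k A).
Implicit Types (A U : {set W}) (B Z : {set X}).

Lemma imsetK_inj B : e @^-1: (e @: B) = B.
Proof. by apply/setP=> x; rewrite inE (mem_imset _ _ e_inj). Qed.

Lemma preimsetK_im A : A \subset im -> e @: (e @^-1: A) = A.
Proof.
move=> sA; apply/setP=> w; apply/imsetP/idP => [[x]|wA]; first by rewrite inE => ? ->.
by have /imsetP[x _ ew] := subsetP sA w wA; exists x; rewrite ?inE -?ew.
Qed.

Lemma imset_sub_im B : e @: B \subset im.
Proof. exact/imsetS/subsetT. Qed.

Lemma k_im A : A \subset im -> k A = 0.
Proof. by rewrite -setD_eq0 k_out => /eqP->. Qed.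

Lemma h_im A : A \subset im -> h A = f (e @^-1: A).
Proof. by move=> sA; rewrite hE k_im ?addr0. Qed.

Lemma splits_im : splits h im.
Proof.
move=> A; rewrite !hE preimsetD preimsetI.
have -> : e @^-1: im = setT by apply/setP=> x; rewrite !inE imset_f.
rewrite setDT setIT f0 add0r (k_out (A :&: im)) (k_out (A :\: im)) setDIl setDv.
by rewrite setI0 k0 addr0 setDDl setUid addrC -k_out.
Qed.

Lemma h_split_im A U : A \subset im ->
  h A = h (A :\: U) + h (A :&: U) <->
  f (e @^-1: A) = f (e @^-1: A :\: e @^-1: U) + f (e @^-1: A :&: e @^-1: U).
Proof.
move=> sA; rewrite -preimsetD -preimsetI !h_im //.
  by apply: subset_trans sA; apply: subsetIl.
by apply: subset_trans sA; apply: subsetDl.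
Qed.

Lemma splits_in_imset B Z : splits_in h (e @: B) (e @: Z) <-> splits_in f B Z.
Proof.
split=> l A sA.
  have /h_split_im := l _ (imsetS e sA).
  by rewrite !imsetK_inj; apply; apply: imset_sub_im.
have sAim := subset_trans sA (imset_sub_im B).
apply/h_split_im => //; rewrite imsetK_inj; apply: l.
by rewrite -(imsetK_inj B); apply: preimsetS.
Qed.

Lemma splits_imset B : splits h (e @: B) -> splits f B.
Proof.
move=> s A; have /h_split_im := s (e @: A).
by rewrite !imsetK_inj; apply; apply: imset_sub_im.
Qed.

Lemma indec_in_imset B : indec_in h (e @: B) <-> indec_in f B.
Proof.
split=> -[n0 m].
  split=> [|Z sZ /splits_in_imset l]; first by rewrite -(imset_eq0 e).
  case: (m _ (imsetS e sZ) l) => [/eqP|/(imset_inj e_inj)]; last by right.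
  by rewrite imset_eq0 => /eqP; left.
split=> [|Z sZ]; first by rewrite imset_eq0.
rewrite -(preimsetK_im (subset_trans sZ (imset_sub_im B))) => /splits_in_imset l.
have sZ' : e @^-1: Z \subset B by rewrite -(imsetK_inj B); apply: preimsetS.
by case: (m _ sZ' l) => ->; [left; rewrite imset0 | right].
Qed.

Section CompatiblePartitions.
Variables (PX : {set {set X}}) (P : {set {set W}}).
Hypotheses (PX_im : forall C, C \in PX -> e @: C \in P)
  (P_im : forall D, D \in P -> (exists2 C, C \in PX & D = e @: C) \/ D \subset ~: im).

Lemma saturated_imset B : saturated PX B -> saturated P (e @: B).
Proof.
move=> sB D DP; case: (P_im DP) => [[C CP ->]|sD]; last first.
  by right; apply: subset_trans sD _; rewrite setCS imset_sub_im.
case: (sB C CP) => s; [left; exact: imsetS | right].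
apply/subsetP=> _ /imsetP[x xC ->]; rewrite inE (mem_imset _ _ e_inj).
by move: (subsetP s x xC); rewrite inE.
Qed.

Lemma saturated_preimset A : saturated P A -> saturated PX (e @^-1: A).
Proof.
move=> sA C CP; case: (sA _ (PX_im CP)) => s; [left | right];
  by rewrite -(imsetK_inj C) -?preimsetC; apply: preimsetS.
Qed.

Lemma splits_sat_imset B : splits_sat f PX B -> splits_sat h P (e @: B).
Proof.
move=> ps A sA; rewrite !hE preimsetD preimsetI imsetK_inj (ps _ (saturated_preimset sA)).
have sBim := imset_sub_im B.
rewrite (k_im (subset_trans (subsetIr _ _) sBim)) addr0 addrAC; congr (_ + _ + _).
by rewrite k_out [RHS]k_out setDDl (setUidPr sBim).
Qed.

Lemma splits_sat_preimset U : splits_sat h P U -> splits_sat f PX (e @^-1: U).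
Proof.
move=> ps B sB; have /h_split_im := ps _ (saturated_imset sB).
by rewrite !imsetK_inj; apply; apply: imset_sub_im.
Qed.

Lemma ES_splits_preimset U : ES f PX -> saturated P U -> splits_sat h P U ->
  splits f (e @^-1: U).
Proof.
case/(ESP _ f0) => _ _ lift sU ps.
exact: lift (saturated_preimset sU) (splits_sat_preimset ps).
Qed.

End CompatiblePartitions.

Lemma ES_preimset_blocks P : ES h P ->
  (forall D, D \in P -> D \subset im \/ D \subset ~: im) ->
  ES f [set B : {set X} | e @: B \in P].
Proof.
have h0 : h set0 = 0 by rewrite hE preimset0 f0 k0 addr0.
case/(ESP _ h0) => pP hi lift sd; set PX := [set B : {set X} | e @: B \in P].
have PX_im B : B \in PX -> e @: B \in P by rewrite inE.
have P_im A : A \in P -> (exists2 B, B \in PX & A = e @: B) \/ A \subset ~: im.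
  move=> AP; case: (sd A AP) => s; [left | by right].
  by exists (e @^-1: A); rewrite ?inE preimsetK_im.
have [cP dP nP] := (partitionP P).1 pP.
apply/(ESP _ f0); split.
- apply/partitionP; split.
  + move=> x; have [D DP xD] := cP (e x).
    case: (P_im D DP) => [[C CX eD]|s]; last by move: (subsetP s _ xD); rewrite inE imset_f.
    by exists C => //; move: xD; rewrite eD (mem_imset _ _ e_inj).
  + move=> C C' x CX C'X xC xC'; apply: (imset_inj e_inj).
    by apply: (dP _ _ (e x)); rewrite ?PX_im ?(mem_imset _ _ e_inj).
  + by rewrite inE imset0.
- by move=> C CX; apply/indec_in_imset/hi/PX_im.
- move=> U sU ps; apply: splits_imset; apply: lift.
    exact: saturated_imset P_im _ sU.
  exact: splits_sat_imset PX_im _ ps.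
Qed.

End Embedding.

Section DisjointUnion.
Variables (X Y : finType).
Implicit Types (PX : {set {set X}}) (PY : {set {set Y}}) (D : {set (X + Y)%type}).

Lemma inl_notin_imset_inr x (B : {set Y}) : (inl x \in (@inr X Y) @: B) = false.
Proof. by apply/imsetP=> -[]. Qed.

Lemma inr_notin_imset_inl y (B : {set X}) : (inr y \in (@inl X Y) @: B) = false.
Proof. by apply/imsetP=> -[]. Qed.

Lemma mem_imset_inl x (B : {set X}) : (inl x \in (@inl X Y) @: B) = (x \in B).
Proof. exact/mem_imset/(@inl_inj X Y). Qed.

Lemma mem_imset_inr y (B : {set Y}) : (inr y \in (@inr X Y) @: B) = (y \in B).
Proof. exact/mem_imset/(@inr_inj X Y). Qed.

Definition mem_imset_sum :=
  (inl_notin_imset_inr, inr_notin_imset_inl, mem_imset_inl, mem_imset_inr).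

Lemma setC_im_inl : ~: ((@inl X Y) @: setT) = (@inr X Y) @: setT.
Proof. by apply/setP=> -[x|y]; rewrite !inE !mem_imset_sum inE. Qed.

Lemma dunion_partition PX PY : partition PX [set: X] -> partition PY [set: Y] ->
  partition (dunion PX PY) [set: (X + Y)%type].
Proof.
move=> /partitionP[cX dX nX] /partitionP[cY dY nY]; apply/partitionP; split.
- case=> [x|y]; [have [C CX xC] := cX x | have [C CY yC] := cY y].
    by exists (inl @: C); rewrite ?mem_imset_sum // !inE (imset_f _ CX).
  by exists (inr @: C); rewrite ?mem_imset_sum // !inE (imset_f _ CY) orbT.
- move=> D D' w; rewrite !inE => /orP[] /imsetP[C CP ->] /orP[] /imsetP[C' CP' ->];
    case: w => w; rewrite ?mem_imset_sum // => wC wC'.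
    by rewrite (dX C C' w).
  by rewrite (dY C C' w).
- rewrite !inE; apply/negP => /orP[] /imsetP[C CP /esym/eqP]; rewrite imset_eq0 => /eqP C0.
    by rewrite -C0 CP in nX.
  by rewrite -C0 CP in nY.
Qed.

Lemma dunion_blocks_inl PX PY D : D \in dunion PX PY ->
  (exists2 C, C \in PX & D = inl @: C) \/ D \subset ~: (@inl X Y) @: setT.
Proof.
rewrite setC_im_inl !inE => /orP[] /imsetP[C CP ->]; first by left; exists C.
by right; apply: imsetS (subsetT _).
Qed.

Lemma dunion_blocks_inr PX PY D : D \in dunion PX PY ->
  (exists2 C, C \in PY & D = inr @: C) \/ D \subset ~: (@inr X Y) @: setT.
Proof.
rewrite -setC_im_inl setCK !inE => /orP[] /imsetP[C CP ->]; last by left; exists C.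
by right; apply: imsetS (subsetT _).
Qed.

End DisjointUnion.

Section StarProduct.
Variables (X Y : finType) (f : {set X} -> int) (g : {set Y} -> int).
Hypotheses (f0 : f set0 = 0) (g0 : g set0 = 0).
Let h := star1 f g.
Local Notation imL := ((@inl X Y) @: setT).
Local Notation imR := ((@inr X Y) @: setT).
Implicit Types (A U : {set (X + Y)%type}) (P : {set {set (X + Y)%type}}).

Lemma star1_0 : h set0 = 0.
Proof. by rewrite /h /star1 !preimset0 f0 g0 addr0. Qed.

Lemma preimset_inr_outL A : inr @^-1: (A :\: imL) = inr @^-1: A.
Proof. by apply/setP=> y; rewrite !inE mem_imset_sum. Qed.

Lemma preimset_inl_outR A : inl @^-1: (A :\: imR) = inl @^-1: A.
Proof. by apply/setP=> x; rewrite !inE mem_imset_sum. Qed.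

Let kL A := g (inr @^-1: A).
Let kR A := f (inl @^-1: A).

Let kL0 : kL set0 = 0. Proof. by rewrite /kL preimset0. Qed.
Let kR0 : kR set0 = 0. Proof. by rewrite /kR preimset0. Qed.
Let kL_out A : kL A = kL (A :\: imL). Proof. by rewrite /kL preimset_inr_outL. Qed.
Let kR_out A : kR A = kR (A :\: imR). Proof. by rewrite /kR preimset_inl_outR. Qed.
Let hL A : h A = f (inl @^-1: A) + kL A. Proof. by []. Qed.
Let hR A : h A = g (inr @^-1: A) + kR A. Proof. exact: addrC. Qed.

Lemma ES_star1_sides P : ES h P -> forall D, D \in P -> D \subset imL \/ D \subset imR.
Proof.
case/(ESP _ star1_0) => _ hi _ D DP; rewrite -setC_im_inl.
apply: indec_in_side (hi D DP) (splits_in_sub _ _).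
exact: (splits_im f0 kL0 kL_out hL).
Qed.

Lemma ES_star1_dunion P : ES h P ->
  [/\ ES f [set C : {set X} | inl @: C \in P], ES g [set C : {set Y} | inr @: C \in P] &
      P = dunion [set C : {set X} | inl @: C \in P] [set C : {set Y} | inr @: C \in P]].
Proof.
move=> es; have sd := ES_star1_sides es; split.
- apply: (ES_preimset_blocks (@inl_inj X Y) f0 kL0 kL_out hL es) => D DP.
  by rewrite setC_im_inl; apply: sd.
- apply: (ES_preimset_blocks (@inr_inj X Y) g0 kR0 kR_out hR es) => D DP.
  by case: (sd D DP) => s; [right; rewrite -setC_im_inl setCK | left].
apply/setP=> D; rewrite !inE; apply/idP/idP => [DP|]; last first.
  by case/orP=> /imsetP[C]; rewrite inE => CP ->.
have [s|s] := sd D DP; apply/orP; [left | right]; apply/imsetP.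
  by exists (inl @^-1: D); rewrite ?inE preimsetK_im.
by exists (inr @^-1: D); rewrite ?inE preimsetK_im.
Qed.

Lemma ES_dunion_star1 PX PY : ES f PX -> ES g PY -> ES h (dunion PX PY).
Proof.
move=> esX esY; set P := dunion PX PY.
have PX_im C : C \in PX -> inl @: C \in P by move=> CP; rewrite !inE imset_f.
have PY_im C : C \in PY -> inr @: C \in P by move=> CP; rewrite !inE imset_f ?orbT.
have [pX hiX _] := (ESP _ f0).1 esX; have [pY hiY _] := (ESP _ g0).1 esY.
apply/(ESP _ star1_0); split; first exact: dunion_partition.
  move=> D; rewrite !inE => /orP[] /imsetP[C CP ->].
    exact/(indec_in_imset (@inl_inj X Y) kL0 kL_out hL C)/hiX.
  exact/(indec_in_imset (@inr_inj X Y) kR0 kR_out hR C)/hiY.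
move=> U sU ps A.
have sL := ES_splits_preimset (@inl_inj X Y) f0 kL0 kL_out hL PX_im
  (@dunion_blocks_inl _ _ _ _) esX sU ps.
have sR := ES_splits_preimset (@inr_inj X Y) g0 kR0 kR_out hR PY_im
  (@dunion_blocks_inr _ _ _ _) esY sU ps.
by rewrite !hL /kL !preimsetD !preimsetI sL sR addrACA.
Qed.

End StarProduct.

Section CardGt1.
Variable T : finType.
Implicit Types (A B S Z : {set T}) (P : {set {set T}}).

Definition card_gt1 A : int := if (1 < #|A|)%N then 1 else 0.

Lemma card_gt1_0 : card_gt1 set0 = 0.
Proof. by rewrite /card_gt1 cards0. Qed.

Lemma card_gt1_le1 A : (#|A| <= 1)%N -> card_gt1 A = 0.
Proof. by rewrite /card_gt1 ltnNge => ->. Qed.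

Lemma card_gt1_gt1 A : (1 < #|A|)%N -> card_gt1 A = 1.
Proof. by rewrite /card_gt1 => ->. Qed.

Lemma pair_split (b b' : T) Z : b \in Z -> b' \notin Z ->
  [set b; b'] :\: Z = [set b'] /\ [set b; b'] :&: Z = [set b].
Proof.
move=> bZ b'Z; have nb : b != b' by apply: contraNneq b'Z => <-.
split; apply/setP=> x; rewrite !inE.
  have [->|_] := eqVneq x b; first by rewrite bZ (negbTE nb).
  by have [->|_] := eqVneq x b'; rewrite ?b'Z ?andbT ?andbF.
have [->|nxb] := eqVneq x b; first by rewrite bZ.
by move: nxb; have [->|//] := eqVneq x b' => nxb; rewrite (negbTE b'Z) andbF.
Qed.

Lemma card_gt1_pair_split b b' Z : b \in Z -> b' \notin Z ->
  card_gt1 [set b; b'] <> card_gt1 ([set b; b'] :\: Z) + card_gt1 ([set b; b'] :&: Z).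
Proof.
move=> bZ b'Z; have nb : b != b' by apply: contraNneq b'Z => <-.
have [-> ->] := pair_split bZ b'Z.
by rewrite card_gt1_gt1 ?cards2 ?nb // !card_gt1_le1 ?cards1.
Qed.

Lemma indec_in_card_gt1 S : S != set0 -> indec_in card_gt1 S.
Proof.
move=> n0; split => // Z sZ l.
have [->|/set0Pn[b bZ]] := eqVneq Z set0; first by left.
have [->|nZS] := eqVneq Z S; first by right.
have /properP[_ [b' b'S b'Z]] : Z \proper S by rewrite properEneq nZS sZ.
have sp : [set b; b'] \subset S.
  by apply/subsetP=> x; rewrite !inE => /orP[] /eqP ->; [exact: (subsetP sZ) | exact: b'S].
by have := card_gt1_pair_split bZ b'Z; rewrite -(l _ sp).
Qed.

(* A block B missing at most one point splits card_gt1 along saturated sets: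
   such a set contains either all of B or nothing of it. *)
Lemma splits_sat_card_gt1 P B : B \in P -> (1 < #|B|)%N -> (#|~: B| <= 1)%N ->
  splits_sat card_gt1 P B.
Proof.
move=> BP cB cBc A sA; have [sBA|sBA] := sA B BP.
  have cAB : (#|A :\: B| <= 1)%N.
    by apply: leq_trans cBc; apply/subset_leq_card; rewrite setDE subsetIr.
  rewrite (setIidPr sBA) (card_gt1_le1 cAB) add0r !card_gt1_gt1 //.
  exact: leq_trans cB (subset_leq_card sBA).
have dAB : [disjoint A & B] by rewrite disjoint_sym disjoints_subset.
by rewrite (setDidPl dAB) (disjoint_setI0 dAB) card_gt1_0 addr0.
Qed.

Lemma not_ES_card_gt1 P B : B \in P -> (1 < #|B|)%N -> #|~: B| = 1%N ->
  ~ ES card_gt1 P.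
Proof.
move=> BP cB cBc /(ESP _ card_gt1_0)[pP _ lift].
have /splitsP := lift B (saturated_block pP BP) (splits_sat_card_gt1 BP cB (eq_leq cBc)).
have /card_gt0P[b bB] := ltnW cB; have /eqP/cards1P[b' eb'] := cBc.
have b'B : b' \notin B by rewrite -in_setC eb' set11.
by move=> /splitsP/(_ [set b; b']); apply: card_gt1_pair_split.
Qed.

Lemma partition_whole : [set: T] != set0 -> partition [set [set: T]] [set: T].
Proof.
move=> n0; apply/partitionP; split; first by move=> x; exists [set: T]; rewrite !inE.
  by move=> C D x; rewrite !inE => /eqP -> /eqP ->.
by rewrite inE eq_sym.
Qed.

Lemma ES_whole (g : {set T} -> int) : g set0 = 0 -> indec_in g [set: T] ->
  ES g [set [set: T]].
Proof.
move=> g0 hi; apply/(ESP _ g0); split.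
- by apply: partition_whole; case: hi.
- by move=> C; rewrite inE => /eqP ->.
move=> U sU _; have [|sUc] := sU [set: T] (set11 _).
  by rewrite subTset => /eqP->; apply: splitsT.
rewrite (_ : U = set0); first exact: splits0.
by apply/setP=> x; rewrite inE; apply/negbTE; move/subsetP/(_ x): sUc; rewrite !inE; apply.
Qed.

End CardGt1.
Arguments card_gt1 {T} A.

Lemma eq_ES (T : finType) (f g : {set T} -> int) P : f =1 g -> f set0 = 0 ->
  ES f P -> ES g P.
Proof.
move=> fg f0; have g0 : g set0 = 0 by rewrite -fg.
case/(ESP _ f0) => pP hi lift; apply/(ESP _ g0); split=> // [C CP|U sU ps A].
  by apply/(eq_indec_in (fun A _ => esym (fg A)))/hi.
by rewrite -!fg; apply: lift => // B sB; rewrite !fg; apply: ps.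
Qed.

Lemma card_gt1_imset (T U : finType) (e : T -> U) (B : {set T}) :
  injective e -> card_gt1 (e @: B) = card_gt1 B.
Proof. by move=> e_inj; rewrite /card_gt1 card_imset. Qed.

Lemma ES_whole_card_gt1 (T : finType) : [set: T] != set0 ->
  ES (@card_gt1 T) [set [set: T]].
Proof. by move=> n0; exact: (ES_whole (@card_gt1_0 T) (indec_in_card_gt1 n0)). Qed.

(* card_gt1 on bool + unit: both restrictions are indecomposable, but the
   two-block partition {inl @: bool, inr @: unit} is not strong. *)
Lemma ES_dunion_not_of_restr : exists (X Y : finType) (f : {set (X + Y)%type} -> int)
    (PX : {set {set X}}) (PY : {set {set Y}}),
  [/\ boolf f, ES (restrL f) PX, ES (restrR f) PY & ~ ES f (dunion PX PY)].
Proof.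
exists bool, unit, card_gt1, [set setT], [set setT]; split.
- exact: card_gt1_0.
- apply: (eq_ES (f := card_gt1)) (card_gt1_0 _) _ => [A|].
    exact/esym/card_gt1_imset/inl_inj.
  by apply: ES_whole_card_gt1; apply/set0Pn; exists true.
- apply: (eq_ES (f := card_gt1)) (card_gt1_0 _) _ => [A|].
    exact/esym/card_gt1_imset/inr_inj.
  by apply: ES_whole_card_gt1; apply/set0Pn; exists tt.
apply: (not_ES_card_gt1 (B := inl @: setT)).
- by rewrite !inE imset_f ?inE.
- by rewrite card_imset ?cardsT ?card_bool //; apply: inl_inj.
- by rewrite setC_im_inl card_imset ?cardsT ?card_unit //; apply: inr_inj.
Qed.

Section RestrictionCounterexample.
Local Notation W := (option bool + unit)%type.
Local Notation L := ((@inl (option bool) unit) @: setT).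
Local Notation PX := [set [set None]; [set Some true; Some false]].

(* On subsets of the left part this is card_gt1, but it charges the whole set
   one extra unit, which glues the blocks of dunion PX [set setT] together. *)
Definition card_gt1_left_top (A : {set W}) : int :=
  card_gt1 (A :&: L) + (A == setT)%:R.

Lemma card_gt1_left_topE (A : {set W}) : A \subset L -> card_gt1_left_top A = card_gt1 A.
Proof.
move=> sA; rewrite /card_gt1_left_top (setIidPl sA) (_ : (A == setT) = false) ?addr0 //.
by apply: contraTF sA => /eqP->; apply/negP=> /subsetP/(_ (inr tt)); rewrite !inE mem_imset_sum => /(_ isT).
Qed.

Lemma card_gt1_left_top0 : card_gt1_left_top set0 = 0.
Proof. by rewrite card_gt1_left_topE ?sub0set ?card_gt1_0. Qed.

Lemma partition_PX : partition PX [set: option bool].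
Proof.
apply/partitionP; split.
- by move=> [b|]; [exists [set Some true; Some false] | exists [set None]];
    rewrite !inE ?eqxx ?orbT //; case: b.
- by move=> C D x; rewrite !inE => /orP[] /eqP -> /orP[] /eqP -> //; rewrite !inE; case: x => [[]|].
- by rewrite !inE; apply/norP; split; apply/eqP => /setP;
    [move/(_ None) | move/(_ (Some true))]; rewrite !inE.
Qed.

Lemma restrL_card_gt1_left_top (B : {set option bool}) :
  restrL card_gt1_left_top B = card_gt1 B.
Proof. by rewrite /restrL card_gt1_left_topE ?card_gt1_imset ?imsetS ?subsetT //; apply: inl_inj. Qed.

Lemma not_ES_restrL : ~ ES (restrL card_gt1_left_top) PX.
Proof.
move/(eq_ES restrL_card_gt1_left_top); rewrite restrL_card_gt1_left_top card_gt1_0 => /(_ erefl).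
apply: (not_ES_card_gt1 (B := [set Some true; Some false])); first by rewrite !inE eqxx orbT.
  by rewrite cards2.
by rewrite cardsCs setCK card_option card_bool cards2.
Qed.

Lemma ES_card_gt1_left_top : ES card_gt1_left_top (dunion PX [set setT]).
Proof.
have f0 := card_gt1_left_top0; apply/(ESP _ f0); split.
- apply: dunion_partition partition_PX (partition_whole _).
  by apply/set0Pn; exists tt.
- move=> D; rewrite !inE => /orP[] /imsetP[C]; rewrite !inE; last first.
    move=> /eqP-> ->; rewrite (_ : [set: unit] = [set tt]) ?imset_set1; first exact: indec_in1.
    by apply/setP=> -[]; rewrite !inE.
  case/orP=> /eqP-> ->; first by rewrite imset_set1; apply: indec_in1.
  apply/(eq_indec_in (f := card_gt1)) => [A sA|].
    by apply: card_gt1_left_topE (subset_trans sA (imsetS _ (subsetT _))).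
  by apply: indec_in_card_gt1; rewrite imset_eq0; apply/set0Pn; exists (Some true); rewrite !inE.
move=> U sU ps; have [->|nU0] := eqVneq U set0; first exact: splits0.
have [->|nUT] := eqVneq U setT; first exact: splitsT.
have nUcT : (~: U == setT) = false.
  by apply: contraNF nU0 => /eqP/(congr1 (@setC W)); rewrite setCK setCT => ->.
exfalso; move: (ps setT (fun C _ => or_introl (subsetT C))).
rewrite /card_gt1_left_top setTD !setTI eqxx nUcT (negbTE nUT) !addr0.
have cL : #|L| = 3%N.
  by rewrite card_imset ?cardsT ?card_option ?card_bool //; apply: inl_inj.
rewrite [~: U :&: _]setIC [U :&: _]setIC -setDE /card_gt1.
have := cardsID U L; rewrite cL.
move: #|L :&: U| #|L :\: U| => a b c3 /=; case: ifP => h1; case: ifP => h2; lia.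
Qed.

End RestrictionCounterexample.

Lemma ES_star1 (X Y : finType) (f : {set X} -> int) (g : {set Y} -> int)
    (P : {set {set (X + Y)%type}}) : f set0 = 0 -> g set0 = 0 ->
  ES (star1 f g) P <->
  exists PX PY, [/\ ES f PX, ES g PY & P = dunion PX PY].
Proof.
move=> f0 g0; split=> [/(ES_star1_dunion f0 g0)[esX esY eP]|[PX [PY [esX esY ->]]]].
  by exists [set C : {set X} | inl @: C \in P], [set C : {set Y} | inr @: C \in P].
exact: ES_dunion_star1.
Qed.

Theorem theorem3p17 :
  (* (1) *)
  (forall (X Y : finType) (f : {set X} -> int) (g : {set Y} -> int),
     boolf f -> boolf g ->
     forall P : {set {set (X + Y)%type}},
       ES (star1 f g) P <->
       exists (PX : {set {set X}}) (PY : {set {set Y}}),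
         [/\ ES f PX, ES g PY & P = dunion PX PY]) /\
  (* (2) *)
  (forall (X : finType) (f : {set X} -> int) (P P' : {set {set X}}),
     boolf f -> partition P [set: X] -> partition P' [set: X] -> refines P P' ->
     ((ES f P /\ ES (fquot P f) (qpart P P')) <->
      (ES f P' /\ ES (restr_part f P') P))) /\
  (* (3) *)
  (forall (X : finType) (f : {set X} -> int), boolf f ->
     [/\ ES f (eqpart X), ES f (icpart f) &
         forall P : {set {set X}}, ES f P ->
           (modular (restr_part f P) <-> P = eqpart X) /\
           (modular (fquot P f) <-> P = icpart f)]) /\
  (* (4) *)
  (exists (X Y : finType) (f : {set (X + Y)%type} -> int)
          (PX : {set {set X}}) (PY : {set {set Y}}),
     [/\ boolf f, ES (restrL f) PX, ES (restrR f) PY & ~ ES f (dunion PX PY)]) /\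
  (exists (X Y : finType) (f : {set (X + Y)%type} -> int)
          (PX : {set {set X}}) (PY : {set {set Y}}),
     [/\ boolf f, partition PX [set: X], partition PY [set: Y],
         ES f (dunion PX PY) & ~ ES (restrL f) PX]).
Proof.
split; first by move=> X Y f g f0 g0 P; apply: ES_star1.
split; first by move=> X f P P' f0 pP pP' refPP'; apply: ES_refine.
split.
  move=> X f f0; rewrite icpart_components //.
  split; [exact: ES_eqpart | exact: ES_components |] => P es.
  by split; [apply: ES_modular_restr_part | rewrite -icpart_components //; apply: ES_modular_fquot].
split; first exact: ES_dunion_not_of_restr.
exists (option bool), unit, card_gt1_left_top,
  [set [set None]; [set Some true; Some false]], [set setT]; split.
- exact: card_gt1_left_top0.
- exact: partition_PX.
- by apply: partition_whole; apply/set0Pn; exists tt.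
- exact: ES_card_gt1_left_top.
- exact: not_ES_restrL.
Qed.
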